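(* Let $m,n$ be positive integers and for each $i\in\{1,\dots,m\}$ let $A^i\in\mathbb{R}^{n_i\times n}$. Let $A=[(A^1)^T,\dots,(A^m)^T]^T\in\mathbb{R}^{N\times n}$ with $N=\sum_i n_i\ge n$, and assume $A^TA$ is full rank. Let $\lambda$ and $\gamma$ denote the largest and smallest eigenvalues of $A^TA$, respectively. Fix $\beta>0$, let $K^*=(A^TA+\beta I)^{-1}$ with $j$-th column $k_j^*$, and let $e_j$ be the $j$-th column of the $n\times n$ identity matrix $I$. Let $K(-1)\in\mathbb{R}^{n\times n}$ be arbitrary, with columns $k_j(-1)$, and for $t=0,1,2,\dots$ define the columns of $K(t)$ by $$k_j(t)=k_j(t-1)-\alpha\sum_{i=1}^m R^i_j(t-1),\qquad R^i_j(s)=\Big((A^i)^TA^i+\tfrac{\beta}{m}I\Big)k_j(s)-\tfrac{1}{m}e_j,\quad j=1,\dots,n,$$ where $\alpha>0$ is a parameter. Define $\rho_K^*=\dfrac{\lambda-\gamma}{\lambda+\gamma+2\beta}$. Then there exists $\alpha>0$ for which there is a positive value $\rho_K<1$ such that for each $j=1,\dots,n$, $$\|k_j(t)-k_j^*\|\le\rho_K\|k_j(t-1)-k_j^*\|,\qquad t=0,1,2,\dots,$$ where $\rho_K\ge\rho_K^*$.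
   Context: $\|\cdot\|$ denotes the Euclidean 2-norm. This iteration is the pre-conditioner update of a distributed (server-based) algorithm for the least-squares problem $\min_x\sum_{i=1}^m\frac12\|A^ix-b^i\|^2$. *)

From HB Require Import structures.
From mathcomp Require Import all_boot all_order all_algebra.
Set Implicit Arguments. Unset Strict Implicit. Unset Printing Implicit Defensive.
Import Order.TTheory GRing.Theory Num.Theory.
Local Open Scope ring_scope.

Section Defs.
Variable R : rcfType.

Definition norm2 (n : nat) (v : 'cV[R]_n) : R :=
  Num.sqrt (\sum_(r < n) v r 0 ^+ 2).

Definition stackA (m n : nat) (ni : 'I_m -> nat) (Ai : forall i : 'I_m, 'M[R]_(ni i, n))
  : 'M[R]_(\sum_(i < m) ni i, n) := \mxcol_(i < m) Ai i.

Definition Rij (m n : nat) (ni : 'I_m -> nat) (Ai : forall i : 'I_m, 'M[R]_(ni i, n))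
  (beta : R) (Ks : 'M[R]_n) (i : 'I_m) (j : 'I_n) : 'cV[R]_n :=
  ((Ai i)^T *m Ai i + (beta / m%:R)%:M) *m col j Ks - m%:R^-1 *: col j (1%:M : 'M[R]_n).

(* Kseq ... Km1 t  =  K(t-1); i.e. Kseq 0 = K(-1), Kseq (t+1) = K(t). *)
Fixpoint Kseq (m n : nat) (ni : 'I_m -> nat) (Ai : forall i : 'I_m, 'M[R]_(ni i, n))
  (beta alpha : R) (Km1 : 'M[R]_n) (t : nat) : 'M[R]_n :=
  match t with
  | 0 => Km1
  | t'.+1 =>
      let Kp := Kseq Ai beta alpha Km1 t' in
      \matrix_(r < n, j < n)
        (col j Kp - alpha *: \sum_(i < m) Rij Ai beta Kp i j) r 0
  end.
End Defs.

(* Writing [H = A^T A + beta I] and [e(t) = k_j(t) - k_j^*], the update reads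
   [e(t) = (I - alpha H) e(t-1)], because [H k_j^* = e_j].  Since
   [<v, H v> >= beta |v|^2] and [|H v|^2 <= C |v|^2] for some [C], the
   expansion [|v - alpha H v|^2 = |v|^2 - 2 alpha <v, H v> + alpha^2 |H v|^2]
   is at most [(1 - alpha beta) |v|^2] once [alpha C <= beta], so a small step
   [alpha] contracts with rate [sqrt (1 - alpha beta) < 1]; enlarging this rate
   to [max rhoK* (sqrt (1 - alpha beta))] keeps it below 1 because
   [rhoK* < 1] follows from [gam >= 0] (the Gram matrix is positive
   semidefinite). *)
From HB Require Import structures.
From mathcomp Require Import all_boot all_order all_algebra.
From mathcomp Require Import ring lra.
Set Implicit Arguments. Unset Strict Implicit. Unset Printing Implicit Defensive.
Import Order.TTheory GRing.Theory Num.Theory.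
Local Open Scope ring_scope.

Section EuclideanDot.
Variable R : rcfType.
Implicit Types (k n : nat) (a b C : R).

Definition dot n (u v : 'cV[R]_n) : R := (u^T *m v) 0 0.

Lemma dotE n (u v : 'cV[R]_n) : dot u v = \sum_(r < n) u r 0 * v r 0.
Proof. by rewrite /dot mxE; apply: eq_bigr => r _; rewrite mxE. Qed.

Lemma norm2_dot n (u : 'cV[R]_n) : norm2 u = Num.sqrt (dot u u).
Proof. by rewrite /norm2 dotE; congr Num.sqrt; apply: eq_bigr => r _; rewrite expr2. Qed.

Lemma dot_ge0 n (u : 'cV[R]_n) : 0 <= dot u u.
Proof. by rewrite dotE; apply: sumr_ge0 => r _; rewrite -expr2 sqr_ge0. Qed.

Lemma dot_gt0 n (u : 'cV[R]_n) : u != 0 -> 0 < dot u u.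
Proof.
apply: contraNT; rewrite lt_def dot_ge0 andbT negbK dotE => /eqP u0.
apply/eqP/matrixP => r c; rewrite ord1 mxE.
have sq_ge0 i : true -> 0 <= u i 0 * u i 0 by rewrite -expr2 sqr_ge0.
have := @psumr_eq0P _ _ xpredT _ sq_ge0 u0 r isT.
by move/eqP; rewrite mulf_eq0 orbb => /eqP.
Qed.

Lemma dotDr n (u v w : 'cV[R]_n) : dot u (v + w) = dot u v + dot u w.
Proof. by rewrite /dot mulmxDr mxE. Qed.

Lemma dotZr n a (u v : 'cV[R]_n) : dot u (a *: v) = a * dot u v.
Proof. by rewrite /dot -scalemxAr mxE. Qed.

Lemma dot_subZ n a (u w : 'cV[R]_n) :
  dot (u - a *: w) (u - a *: w) = dot u u - 2 * a * dot u w + a ^+ 2 * dot w w.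
Proof.
rewrite !dotE !mulr_sumr -sumrB -big_split.
by apply: eq_bigr => r _; rewrite !mxE /=; ring.
Qed.

Lemma dot_gram k n (A : 'M[R]_(k, n)) (v : 'cV[R]_n) :
  dot v ((A^T *m A) *m v) = dot (A *m v) (A *m v).
Proof. by rewrite /dot trmx_mul !mulmxA. Qed.

Lemma dot_mulmx_bounded n (H : 'M[R]_n) :
  exists2 C, 0 < C & forall v, dot (H *m v) (H *m v) <= C * dot v v.
Proof.
set S := fun r : 'I_n => \sum_(c < n) `|H r c|.
exists (\sum_(r < n) S r ^+ 2 + 1).
  by rewrite ltr_wpDl // sumr_ge0 // => r _; rewrite sqr_ge0.
move=> v; set s := Num.sqrt (dot v v).
have s0 : 0 <= s by rewrite sqrtr_ge0.
have v_le c : `|v c 0| <= s.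
  rewrite -sqrtr_sqr ler_wsqrtr // dotE (bigD1 c) //= -expr2 lerDl.
  by apply: sumr_ge0 => i _; rewrite -expr2 sqr_ge0.
have Hv_le r : `|(H *m v) r 0| <= S r * s.
  rewrite mxE; apply: le_trans (ler_norm_sum _ _ _) _; rewrite mulr_suml.
  by apply: ler_sum => c _; rewrite normrM ler_wpM2l.
have Hv_sqr_le r : (H *m v) r 0 * (H *m v) r 0 <= S r ^+ 2 * dot v v.
  rewrite -(sqr_sqrtr (dot_ge0 v)) -/s -exprMn -expr2 -real_normK ?num_real //.
  by rewrite lerXn2r ?nnegrE ?normr_ge0 ?mulr_ge0 ?sumr_ge0.
rewrite [dot (H *m v) _]dotE mulrDl mul1r mulr_suml ler_wpDr ?dot_ge0 //.
exact: ler_sum.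
Qed.

Section Coercive.
Variables (n : nat) (H : 'M[R]_n) (b : R).
Hypothesis b_gt0 : 0 < b.
Hypothesis H_coercive : forall v, b * dot v v <= dot v (H *m v).

Lemma coercive_unitmx : H \in unitmx.
Proof.
rewrite unitmxE unitfE; apply/det0P => -[w w_neq0 wH0].
have wT_neq0 : w^T != 0 by rewrite trmx_eq0.
have := H_coercive w^T; rewrite {2}/dot trmxK mulmxA wH0 mul0mx mxE.
by rewrite pmulr_rle0 // leNgt dot_gt0.
Qed.

Lemma dot_step_le C a (v : 'cV[R]_n) :
  dot (H *m v) (H *m v) <= C * dot v v -> 0 <= a -> a * C <= b ->
  dot (v - a *: (H *m v)) (v - a *: (H *m v)) <= (1 - a * b) * dot v v.
Proof.
move=> Hv_le a_ge0 aC_le; rewrite dot_subZ.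
have d_ge0 := dot_ge0 v; have h_ge0 := dot_ge0 (H *m v).
have ah : a * dot (H *m v) (H *m v) <= a * (C * dot v v) by rewrite ler_wpM2l.
have aCd : a * C * dot v v <= b * dot v v by rewrite ler_wpM2r.
have abq : a * (b * dot v v) <= a * dot v (H *m v) by rewrite ler_wpM2l.
nra.
Qed.

Lemma coercive_step_contraction :
  exists2 a, 0 < a & exists2 rho, 0 < rho < 1 &
    forall v, norm2 (v - a *: (H *m v)) <= rho * norm2 v.
Proof.
have [C C_gt0 HC] := dot_mulmx_bounded H.
have Cb_gt0 : 0 < C + b ^+ 2 by rewrite ltr_wpDr ?sqr_ge0.
set a := b / (C + b ^+ 2).
have a_gt0 : 0 < a by rewrite divr_gt0.
have aC_le : a * C <= b.
  by rewrite mulrAC ler_pdivrMr // ler_pM2l // lerDl sqr_ge0.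
have ab_lt1 : a * b < 1.
  by rewrite mulrAC ltr_pdivrMr // mul1r -expr2 ltrDr.
have ab_gt0 : 0 < a * b by rewrite mulr_gt0.
exists a => //; exists (Num.sqrt (1 - a * b)).
  apply/andP; split; first by rewrite sqrtr_gt0; lra.
  by rewrite -[X in _ < X](sqrtr1 R) ltr_sqrt ?ltr01 //; lra.
move=> v; rewrite !norm2_dot -sqrtrM; last by rewrite subr_ge0 ltW.
by apply: ler_wsqrtr; apply: dot_step_le => //; rewrite ltW.
Qed.

End Coercive.

Lemma dot_gram_shift_ge k n (A : 'M[R]_(k, n)) b (v : 'cV[R]_n) :
  b * dot v v <= dot v ((A^T *m A + b%:M) *m v).
Proof.
by rewrite mulmxDl mul_scalar_mx dotDr dotZr dot_gram lerDr dot_ge0.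
Qed.

Lemma gram_eigenvalue_ge0 k n (A : 'M[R]_(k, n)) mu :
  eigenvalue (A^T *m A) mu -> 0 <= mu.
Proof.
case/eigenvalueP => w wM w_neq0.
have AwT : (A^T *m A) *m w^T = mu *: w^T.
  by rewrite -[A^T *m A]trmxK trmx_mul trmxK -trmx_mul wM linearZ.
have := dot_gram A w^T; rewrite AwT dotZr => mu_dot.
have wT_gt0 : 0 < dot w^T w^T by rewrite dot_gt0 ?trmx_eq0.
by rewrite -(pmulr_lge0 _ wT_gt0) mu_dot dot_ge0.
Qed.

End EuclideanDot.

Section Iteration.
Variables (R : rcfType) (m n : nat) (ni : 'I_m -> nat).
Variables (Ai : forall i : 'I_m, 'M[R]_(ni i, n)) (beta alpha : R) (Km1 : 'M[R]_n).
Hypothesis m_gt0 : (0 < m)%N.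

Let H := (stackA Ai)^T *m stackA Ai + beta%:M.

Lemma gram_stackA : (stackA Ai)^T *m stackA Ai = \sum_i (Ai i)^T *m Ai i.
Proof. by rewrite /stackA tr_mxcol mul_mxrow_mxcol. Qed.

Lemma sum_Rij (K : 'M[R]_n) j :
  \sum_i Rij Ai beta K i j = H *m col j K - col j 1%:M.
Proof.
have m_neq0 : m%:R != 0 :> R by rewrite pnatr_eq0 -lt0n.
rewrite /Rij sumrB; under eq_bigr do rewrite mulmxDl mul_scalar_mx.
rewrite big_split -mulmx_suml -gram_stackA !sumr_const card_ord !scalerMnl.
rewrite -(mulr_natr m%:R^-1) -(mulr_natr (beta / m%:R)) mulVf // divfK //.
by rewrite scale1r /H mulmxDl mul_scalar_mx.
Qed.

Lemma col_Kseq_succ t j :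
  col j (Kseq Ai beta alpha Km1 t.+1) =
  col j (Kseq Ai beta alpha Km1 t) - alpha *: (H *m col j (Kseq Ai beta alpha Km1 t) - col j 1%:M).
Proof. by rewrite -sum_Rij; apply/matrixP => r c; rewrite ord1 !mxE. Qed.

Lemma Kseq_error_succ (Kstar : 'M[R]_n) t j :
  H *m Kstar = 1%:M ->
  let e := col j (Kseq Ai beta alpha Km1 t) - col j Kstar in
  col j (Kseq Ai beta alpha Km1 t.+1) - col j Kstar = e - alpha *: (H *m e).
Proof.
move=> HK e; have HKj : H *m col j Kstar = col j 1%:M by rewrite !colE mulmxA HK.
by rewrite col_Kseq_succ /e mulmxBr HKj addrAC.
Qed.

End Iteration.

Theorem lemma1 (R : rcfType) (m n : nat) (ni : 'I_m -> nat)
  (Ai : forall i : 'I_m, 'M[R]_(ni i, n))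
  (lam gam beta : R) (Km1 : 'M[R]_n) :
  (0 < m)%N -> (0 < n)%N ->
  (n <= \sum_(i < m) ni i)%N ->
  \rank ((stackA Ai)^T *m stackA Ai) = n ->
  eigenvalue ((stackA Ai)^T *m stackA Ai) lam ->
  eigenvalue ((stackA Ai)^T *m stackA Ai) gam ->
  (forall mu, eigenvalue ((stackA Ai)^T *m stackA Ai) mu -> gam <= mu <= lam) ->
  0 < beta ->
  let Kstar := invmx ((stackA Ai)^T *m stackA Ai + beta%:M) in
  let rhoKstar := (lam - gam) / (lam + gam + 2 * beta) in
  exists alpha : R, 0 < alpha /\
    exists rhoK : R, [/\ 0 < rhoK, rhoK < 1, rhoKstar <= rhoK &
      forall (j : 'I_n) (t : nat),
        norm2 (col j (Kseq Ai beta alpha Km1 t.+1) - col j Kstar)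
        <= rhoK * norm2 (col j (Kseq Ai beta alpha Km1 t) - col j Kstar)].
Proof.
move=> m_gt0 _ _ _ _ eig_gam eig_bounds beta_gt0 Kstar rhoKstar.
have coercive := dot_gram_shift_ge (stackA Ai) beta.
have [alpha alpha_gt0 [rho /andP[rho_gt0 rho_lt1] contract]] :=
  coercive_step_contraction beta_gt0 coercive.
have gam_ge0 := gram_eigenvalue_ge0 eig_gam.
have /andP[_ gam_le_lam] := eig_bounds _ eig_gam.
have rhoKstar_lt1 : rhoKstar < 1 by rewrite ltr_pdivrMr; lra.
exists alpha; split => //; exists (Num.max rhoKstar rho); split.
- by rewrite lt_max rho_gt0 orbT.
- by rewrite gt_max rhoKstar_lt1.
- by rewrite le_max lexx.
move=> j t; rewrite Kseq_error_succ ?mulmxV ?(coercive_unitmx beta_gt0 coercive) //.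
apply: le_trans (contract _) _; rewrite ler_wpM2r ?le_max ?lexx ?orbT //.
by rewrite norm2_dot sqrtr_ge0.
Qed.
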